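(* Let $\{X(t)\}$ be generated by the voting diffusion model with a communicating pair process $\{\{i_1(t),i_2(t)\}\}$ and a subject process $\{S(t)\}$. Fix a candidate $j\in[n]$ and define the random graph $G^{(j)}=([m],E^{(j)})$ by $$E^{(j)}=\Big\{\{a,b\}: a\ne b\in[m],\ \sum_{t=0}^{\infty}\mathbf{1}_{\{\{i_1(t),i_2(t)\}=\{a,b\}\}}\,\mathbf{1}_{\{j\in S(t)\}}=\infty\Big\},$$ i.e. $\{a,b\}$ is an edge iff $a$ and $b$ are the communicating pair and candidate $j$ is in the subject set at infinitely many times. Then for any agents $a,b\in[m]$, the event that $a$ and $b$ lie in the same connected component of $G^{(j)}$ is contained in the event $\{\lim_{t\to\infty}(X_{aj}(t)-X_{bj}(t))=0\}$.
   Context: Voting diffusion model: there are $m$ agents indexed by $[m]=\{1,\dots,m\}$ and $n$ candidates indexed by $[n]$. The opinion profile at time $t\in\{0,1,2,\dots\}$ is a random real $m\times n$ matrix $X(t)$, where $X_{ij}(t)$ is agent $i$'s score of candidate $j$. A communicating pair process is a sequence of random unordered pairs $\{i_1(t),i_2(t)\}$ with $i_1(t)\ne i_2(t)\in[m]$; a subject process is a sequence of random subsets $S(t)\subseteq[n]$; both are arbitrary (measurable) processes. The update is: $X_{ij}(t+1)=\tfrac12\big(X_{i_1(t)j}(t)+X_{i_2(t)j}(t)\big)$ if $i\in\{i_1(t),i_2(t)\}$ and $j\in S(t)$, and $X_{ij}(t+1)=X_{ij}(t)$ otherwise. *)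

From Stdlib Require Export Reals Relations.
Open Scope R_scope.

(* Agents are 0..m-1, candidates 0..n-1.  One sample path of the voting
   diffusion model: X t i j is agent i's score of candidate j at time t;
   {i1 t, i2 t} is the communicating pair and Sub t the subject set at time t. *)
Definition voting_diffusion (m n : nat) (X : nat -> nat -> nat -> R)
    (i1 i2 : nat -> nat) (Sub : nat -> nat -> Prop) : Prop :=
  (forall t, (i1 t < m)%nat /\ (i2 t < m)%nat /\ i1 t <> i2 t) /\
  (forall t i j, (i < m)%nat -> (j < n)%nat ->
     ((i = i1 t \/ i = i2 t) /\ Sub t j ->
        X (t + 1)%nat i j = (X t (i1 t) j + X t (i2 t) j) / 2) /\
     (~ ((i = i1 t \/ i = i2 t) /\ Sub t j) ->
        X (t + 1)%nat i j = X t i j)).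

Definition edge_j (m : nat) (i1 i2 : nat -> nat) (Sub : nat -> nat -> Prop)
    (j a b : nat) : Prop :=
  (a < m)%nat /\ (b < m)%nat /\ a <> b /\
  forall N : nat, exists t : nat, (N <= t)%nat /\
    ((i1 t = a /\ i2 t = b) \/ (i1 t = b /\ i2 t = a)) /\ Sub t j.

Definition same_component (m : nat) (i1 i2 : nat -> nat)
    (Sub : nat -> nat -> Prop) (j a b : nat) : Prop :=
  clos_refl_trans nat (edge_j m i1 i2 Sub j) a b.

From Stdlib Require Import Reals Relations Lra Lia Classical.
Open Scope R_scope.

(* The energy V(t) = sum_i X(t,i,j)^2 never
   increases, and an averaging step on j between agents p, q lowers it by
   (X_p - X_q)^2 / 2.  As V is bounded below it converges, so the gaps of the
   pairs that average on j eventually stay below any d > 0.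
   Suppose X_a - X_b does not tend to 0: at some late time t the values of a
   and b are eps apart.  Cutting [X_a, X_a + eps] into m + 1 bands of width w,
   one band contains no agent's value, which splits the agents into a low
   group (below c) and a high group (above c + w), with a and b on opposite
   sides.  Once active gaps stay below d < w, averaging never moves an agent
   across the empty band, so the split persists forever.  But a path from a to
   b in G^(j) has an edge crossing the split, and that edge averages on j at
   some later time with a gap of at least w > d: contradiction. *)

Lemma Rabs_le_between (x d : R) : Rabs x <= d -> - d <= x <= d.
Proof.
  intros H. pose proof (Rle_abs x). pose proof (Rle_abs (- x)).
  rewrite Rabs_Ropp in *. lra.
Qed.

Fixpoint sumsq (f : nat -> R) (k : nat) : R :=
  match k with O => 0 | S k => sumsq f k + f k ^ 2 end.

Lemma sumsq_nonneg (f : nat -> R) (k : nat) : 0 <= sumsq f k.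
Proof. induction k; simpl; nra. Qed.

Lemma sumsq_ext (f g : nat -> R) (k : nat) :
  (forall i, (i < k)%nat -> g i = f i) -> sumsq g k = sumsq f k.
Proof.
  induction k as [|k IH]; intros H; simpl; [reflexivity|].
  rewrite IH by (intros; apply H; lia). rewrite H by lia. reflexivity.
Qed.

Lemma sumsq_update (f g : nat -> R) (k p : nat) : (p < k)%nat ->
  (forall i, (i < k)%nat -> i <> p -> g i = f i) ->
  sumsq g k = sumsq f k - f p ^ 2 + g p ^ 2.
Proof.
  induction k as [|k IH]; intros Hp H; [lia|]. simpl.
  destruct (Nat.eq_dec p k) as [->|Hne].
  - rewrite (sumsq_ext f g k) by (intros; apply H; lia). ring.
  - rewrite IH by (try lia; intros; apply H; lia). rewrite (H k) by lia. ring.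
Qed.

Lemma empty_band (w : R) : 0 < w -> forall n (f : nat -> R) lo,
  exists k, (k <= n)%nat /\ forall i, (i < n)%nat ->
    ~ (lo + INR k * w <= f i < lo + INR k * w + w).
Proof.
  intros Hw n; induction n as [|n IH]; intros f lo.
  - exists O; split; [lia|]; intros; lia.
  - destruct (classic (exists i0, (i0 < S n)%nat /\ lo <= f i0 < lo + w))
      as [[i0 [Hi0 Hin]]|Hnone].
    + (* the lowest band is hit by f i0: drop i0 and recurse from lo + w *)
      set (g := fun i => if Nat.ltb i i0 then f i else f (S i)).
      destruct (IH g (lo + w)) as [k [Hk Hg]].
      exists (S k); split; [lia|]. intros i Hi. rewrite S_INR.
      destruct (Nat.lt_total i i0) as [Hlt|[Heq|Hgt]].
      * specialize (Hg i ltac:(lia)). unfold g in Hg.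
        rewrite (proj2 (Nat.ltb_lt i i0) Hlt) in Hg.
        intro; apply Hg; nra.
      * subst i. pose proof (pos_INR k). nra.
      * destruct i as [|i']; [lia|].
        specialize (Hg i' ltac:(lia)). unfold g in Hg.
        rewrite (proj2 (Nat.ltb_ge i' i0) ltac:(lia)) in Hg.
        intro; apply Hg; nra.
    + exists O; split; [lia|]. intros i Hi Hin. apply Hnone.
      exists i; split; [exact Hi|]. simpl in Hin. lra.
Qed.

Lemma path_crosses {A : Type} (E : relation A) (P : A -> Prop) (a b : A) :
  clos_refl_trans A E a b -> (P a /\ ~ P b \/ ~ P a /\ P b) ->
  exists u v, E u v /\ (P u /\ ~ P v \/ ~ P u /\ P v).
Proof.
  induction 1 as [x y H|x|x y z _ IH1 _ IH2]; intros Hcross.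
  - exists x, y; auto.
  - tauto.
  - destruct (classic (P y)); destruct Hcross;
      first [apply IH2; tauto | apply IH1; tauto].
Qed.

Section SamplePath.
Variables (m n : nat) (X : nat -> nat -> nat -> R) (i1 i2 : nat -> nat)
  (Sub : nat -> nat -> Prop) (j : nat).
Hypothesis HV : voting_diffusion m n X i1 i2 Sub.
Hypothesis Hj : (j < n)%nat.

Definition gap (s : nat) : R := X s (i1 s) j - X s (i2 s) j.

Lemma pair_valid (s : nat) : (i1 s < m)%nat /\ (i2 s < m)%nat /\ i1 s <> i2 s.
Proof. exact (proj1 HV s). Qed.

Lemma update_active (s i : nat) : (i < m)%nat -> (i = i1 s \/ i = i2 s) ->
  Sub s j -> X (S s) i j = (X s (i1 s) j + X s (i2 s) j) / 2.
Proof.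
  intros Hi Hpair HS. rewrite <- Nat.add_1_r.
  apply (proj1 (proj2 HV s i j Hi Hj)); tauto.
Qed.

Lemma update_inactive (s i : nat) : (i < m)%nat ->
  ~ ((i = i1 s \/ i = i2 s) /\ Sub s j) -> X (S s) i j = X s i j.
Proof.
  intros Hi Hnot. rewrite <- Nat.add_1_r.
  exact (proj2 (proj2 HV s i j Hi Hj) Hnot).
Qed.

Definition energy (s : nat) : R := sumsq (fun i => X s i j) m.

Lemma energy_active (s : nat) : Sub s j ->
  energy (S s) = energy s - gap s ^ 2 / 2.
Proof.
  intros HS. destruct (pair_valid s) as [Hp [Hq Hpq]].
  set (p := i1 s) in *. set (q := i2 s) in *.
  set (f := fun i => X s i j). set (g := fun i => X (S s) i j).
  (* pass from f to g through h, which is updated at p only *)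
  set (h := fun i => if Nat.eqb i p then g p else f i).
  assert (Eh : sumsq h m = sumsq f m - f p ^ 2 + h p ^ 2).
  { apply sumsq_update; auto. intros i _ Hi. unfold h.
    rewrite (proj2 (Nat.eqb_neq i p) Hi). reflexivity. }
  assert (Eg : sumsq g m = sumsq h m - h q ^ 2 + g q ^ 2).
  { apply sumsq_update; auto. intros i Hi Hiq. unfold h, g, f.
    destruct (Nat.eqb_spec i p) as [->|Hip]; [reflexivity|].
    apply update_inactive; [exact Hi|]. unfold p, q in *. tauto. }
  assert (Gp : g p = (f p + f q) / 2) by (apply update_active; auto).
  assert (Gq : g q = (f p + f q) / 2) by (apply update_active; auto).
  assert (Hhp : h p = g p) by (unfold h; rewrite Nat.eqb_refl; reflexivity).
  assert (Hhq : h q = f q).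
  { unfold h. rewrite (proj2 (Nat.eqb_neq q p) (not_eq_sym Hpq)). reflexivity. }
  unfold energy, gap. fold f g p q.
  rewrite Eg, Eh, Hhp, Hhq, Gp, Gq. unfold f. field.
Qed.

Lemma energy_inactive (s : nat) : ~ Sub s j -> energy (S s) = energy s.
Proof.
  intros HS. apply sumsq_ext. intros i Hi. apply update_inactive; tauto.
Qed.

Lemma energy_decreasing : Un_decreasing energy.
Proof.
  intro s. destruct (classic (Sub s j)) as [HS|HS].
  - rewrite energy_active by exact HS. pose proof (pow2_ge_0 (gap s)). lra.
  - rewrite energy_inactive by exact HS. lra.
Qed.

(* Since the energy converges, active gaps eventually stay below any d > 0. *)
Lemma active_gaps_small (d : R) : 0 < d ->
  exists T, forall s, (T <= s)%nat -> Sub s j -> Rabs (gap s) <= d.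
Proof.
  intros Hd.
  assert (Hlb : has_lb energy).
  { exists 0. intros x [k ->]. unfold opp_seq.
    pose proof (sumsq_nonneg (fun i => X k i j) m). unfold energy. lra. }
  destruct (decreasing_cv energy energy_decreasing Hlb) as [l Hl].
  destruct (Hl (d ^ 2 / 2)) as [T HT]; [nra|].
  exists T. intros s Hs HS.
  pose proof (decreasing_ineq energy l energy_decreasing Hl (S s)) as Hlim.
  pose proof (decreasing_prop energy T s energy_decreasing Hs) as Hmono.
  specialize (HT T (le_n T)). unfold Rdist in HT. apply Rabs_def2 in HT.
  pose proof (energy_active s HS) as Hdrop.
  destruct (Rle_dec (Rabs (gap s)) d) as [|Hgt]; [assumption|exfalso].
  assert (d ^ 2 < gap s ^ 2).
  { rewrite <- (pow2_abs (gap s)). pose proof (Rabs_pos (gap s)). nra. }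
  lra.
Qed.

Definition split_at (t : nat) (c w : R) : Prop :=
  forall i, (i < m)%nat -> X t i j < c \/ c + w <= X t i j.

Lemma split_persists (t : nat) (c w d : R) : d < w ->
  (forall s, (t <= s)%nat -> Sub s j -> Rabs (gap s) <= d) ->
  split_at t c w ->
  forall k i, (i < m)%nat ->
    (X t i j < c -> X (t + k)%nat i j < c) /\
    (~ X t i j < c -> c + w <= X (t + k)%nat i j).
Proof.
  intros Hdw Hsmall Hsplit k. induction k as [|k IH]; intros i Hi.
  - rewrite Nat.add_0_r. destruct (Hsplit i Hi); split; intros; lra.
  - rewrite Nat.add_succ_r. set (s := (t + k)%nat) in *.
    destruct (classic ((i = i1 s \/ i = i2 s) /\ Sub s j)) as [[Hpair HS]|Hnot].
    + rewrite update_active by assumption.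
      destruct (pair_valid s) as [Hp [Hq _]].
      pose proof (IH _ Hp) as IHp. pose proof (IH _ Hq) as IHq.
      pose proof (Hsmall s ltac:(unfold s; lia) HS) as Hgap. unfold gap in Hgap.
      apply Rabs_le_between in Hgap.
      (* a mixed pair would have gap at least w > d *)
      destruct (classic (X t (i1 s) j < c)); destruct (classic (X t (i2 s) j < c));
        destruct Hpair; subst i; split; intros; try tauto; lra.
    + rewrite update_inactive by assumption. apply IH, Hi.
Qed.

(* A persistent split cannot separate two agents of the same component:
   some edge crosses it and averages on j later, with a gap of at least w. *)
Lemma split_within_component (t : nat) (c w d : R) (a b : nat) : d < w ->
  (forall s, (t <= s)%nat -> Sub s j -> Rabs (gap s) <= d) ->
  split_at t c w ->
  same_component m i1 i2 Sub j a b ->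
  (X t a j < c /\ ~ X t b j < c \/ ~ X t a j < c /\ X t b j < c) -> False.
Proof.
  intros Hdw Hsmall Hsplit Hcomp Hsep.
  destruct (path_crosses _ (fun i => X t i j < c) a b Hcomp Hsep)
    as [u [v [[Hu [Hv [_ Hedge]]] Huv]]].
  destruct (Hedge t) as [s [Hs [Hpair HS]]].
  pose proof (split_persists t c w d Hdw Hsmall Hsplit (s - t) u Hu) as [Iu1 Iu2].
  pose proof (split_persists t c w d Hdw Hsmall Hsplit (s - t) v Hv) as [Iv1 Iv2].
  replace (t + (s - t))%nat with s in Iu1, Iu2, Iv1, Iv2 by lia.
  pose proof (Hsmall s Hs HS) as Hgap. unfold gap in Hgap.
  apply Rabs_le_between in Hgap.
  destruct Hpair as [[E1 E2]|[E1 E2]]; rewrite E1, E2 in Hgap;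
    destruct Huv as [[H3 H4]|[H3 H4]];
    first [specialize (Iu1 H3); specialize (Iv2 H4); lra
          |specialize (Iu2 H3); specialize (Iv1 H4); lra].
Qed.

Lemma split_between (t p q : nat) (w : R) : 0 < w -> (p < m)%nat ->
  (INR m + 1) * w <= X t q j - X t p j ->
  exists c, split_at t c w /\ X t p j < c /\ ~ X t q j < c.
Proof.
  intros Hw Hp Hpq.
  destruct (empty_band w Hw m (fun i => X t i j) (X t p j)) as [k [Hk Hband]].
  pose proof (le_INR _ _ Hk) as HkI. pose proof (pos_INR k).
  exists (X t p j + INR k * w).
  assert (Hsplit : split_at t (X t p j + INR k * w) w).
  { intros i Hi. specialize (Hband i Hi). simpl in Hband.
    destruct (Rlt_le_dec (X t i j) (X t p j + INR k * w)); [left; assumption|].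
    right. apply Rnot_lt_le. intro. tauto. }
  split; [exact Hsplit|]. split; [|nra].
  destruct (Hsplit p Hp); [assumption|nra].
Qed.

End SamplePath.

Theorem theorem3 (m n : nat) (X : nat -> nat -> nat -> R)
    (i1 i2 : nat -> nat) (Sub : nat -> nat -> Prop) (j a b : nat) :
  voting_diffusion m n X i1 i2 Sub ->
  (j < n)%nat -> (a < m)%nat -> (b < m)%nat ->
  same_component m i1 i2 Sub j a b ->
  Un_cv (fun t => X t a j - X t b j) 0.
Proof.
  intros HV Hj Ha Hb Hcomp eps Heps. apply NNPP. intro Hno.
  pose proof (pos_INR m) as Hm.
  set (w := eps / (INR m + 1)).
  assert (Hw : 0 < w) by (unfold w; apply Rdiv_lt_0_compat; lra).
  assert (Hmw : (INR m + 1) * w = eps) by (unfold w; field; lra).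
  destruct (active_gaps_small m n X i1 i2 Sub j HV Hj (w / 2) ltac:(lra)) as [T HT].
  assert (exists t, (T <= t)%nat /\ eps <= Rabs (X t a j - X t b j)) as [t [Ht Hfar]].
  { apply NNPP. intro Hnear. apply Hno. exists T. intros t Ht.
    unfold Rdist. rewrite Rminus_0_r. apply Rnot_le_lt. intro. apply Hnear. eauto. }
  assert (Hsmall : forall s, (t <= s)%nat -> Sub s j ->
                     Rabs (gap X i1 i2 j s) <= w / 2).
  { intros s Hs HS. apply HT; [lia | exact HS]. }
  destruct (Rle_dec 0 (X t a j - X t b j)) as [Hpos|Hneg].
  - rewrite Rabs_right in Hfar by lra.
    destruct (split_between m X j t b a w Hw Hb ltac:(lra))
      as [c [Hsplit [Hbc Hac]]].
    apply (split_within_component m n X i1 i2 Sub j HV Hj t c w (w / 2) a b);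
      auto; lra.
  - rewrite Rabs_left in Hfar by lra.
    destruct (split_between m X j t a b w Hw Ha ltac:(lra))
      as [c [Hsplit [Hac Hbc]]].
    apply (split_within_component m n X i1 i2 Sub j HV Hj t c w (w / 2) a b);
      auto; lra.
Qed.
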